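(* Let $\mathbb{X}$ be a Banach space, let $\Sigma\subset\mathbb{X}$ be connected, and let $\mathscr{H}$ be a multiresolution family for $\Sigma$ with inflation factor $A_{\mathscr{H}}>1$. Let $\mathscr{H}_0$ be the set of balls $Q\in\mathscr{H}$ such that $\beta_\Sigma(Q)=0$ or $\Sigma\subset12Q$. Then for every $s>1$, $$\sum_{Q\in\mathscr{H}_0}\beta_\Sigma(Q)^s\,\mathrm{diam}\,Q\leq C(s)\,A_{\mathscr{H}}\,\mathcal{H}^1(\Sigma),$$ where $C(s)<\infty$ depends only on $s$ (and $C(s)\to\infty$ as $s\downarrow1$).
   Context: All Banach spaces are real. For a closed ball $Q=B(x,r)$ and $\lambda>0$, $\lambda Q=B(x,\lambda r)$. For a nonempty set $E$ and a set $Q$ of positive diameter, $\beta_E(Q)=\inf_L\sup_{x\in E\cap Q}\mathrm{dist}(x,L)/\mathrm{diam}\,Q$ if $E\cap Q\neq\emptyset$ ($L$ ranging over lines), and $\beta_E(Q)=0$ otherwise. For $\rho>0$, a $\rho$-net for $E$ is a set $X\subset E$ with $|y-z|\geq\rho$ for distinct $y,z\in X$ and $\mathrm{dist}(x,X)<\rho$ for all $x\in E$. A multiresolution family for $E$ with inflation factor $A>1$ is $\{B(x,A2^{-k}):x\in X_k,\ k\in\mathbb{Z}\}$ (indexed by pairs $(k,x)$), where $(X_k)_{k\in\mathbb{Z}}$ is nested ($X_k\subset X_{k+1}$) and each $X_k$ is a $2^{-k}$-net for $E$. $\mathcal{H}^1$ is one-dimensional Hausdorff measure. *)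

From Stdlib Require Import Reals Lra ZArith List Classical ClassicalEpsilon.
Open Scope R_scope.

(* sup_set P = least upper bound of P if it exists (P nonempty & bounded above),
   and 0 otherwise (convention, only used where the lub exists). *)
Definition sup_set (P : R -> Prop) : R :=
  match excluded_middle_informative (exists l, is_lub P l) with
  | left H => proj1_sig (constructive_indefinite_description _ H)
  | right _ => 0
  end.
Definition inf_set (P : R -> Prop) : R := - sup_set (fun y => P (- y)).

(* real power b^s with the convention 0^s = 0 (s > 0) *)
Definition rpow (b s : R) : R := if Rlt_dec 0 b then Rpower b s else 0.

Record Banach := {
  V :> Type;
  vzero : V;
  vadd : V -> V -> V;
  vopp : V -> V;
  vscal : R -> V -> V;
  vnorm : V -> R;
  vadd_assoc : forall x y z, vadd x (vadd y z) = vadd (vadd x y) z;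
  vadd_comm : forall x y, vadd x y = vadd y x;
  vadd_0 : forall x, vadd x vzero = x;
  vadd_opp : forall x, vadd x (vopp x) = vzero;
  vscal_1 : forall x, vscal 1 x = x;
  vscal_assoc : forall a b x, vscal a (vscal b x) = vscal (a * b) x;
  vscal_distr_v : forall a x y, vscal a (vadd x y) = vadd (vscal a x) (vscal a y);
  vscal_distr_r : forall a b x, vscal (a + b) x = vadd (vscal a x) (vscal b x);
  vnorm_eq0 : forall x, vnorm x = 0 -> x = vzero;
  vnorm_scal : forall a x, vnorm (vscal a x) = Rabs a * vnorm x;
  vnorm_triangle : forall x y, vnorm (vadd x y) <= vnorm x + vnorm y;
  vcomplete : forall u : nat -> V,
      (forall eps, 0 < eps -> exists N, forall m n, (N <= m)%nat -> (N <= n)%nat ->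
          vnorm (vadd (u m) (vopp (u n))) < eps) ->
      exists l, forall eps, 0 < eps -> exists N, forall n, (N <= n)%nat ->
          vnorm (vadd (u n) (vopp l)) < eps
}.

Section Metric.
Variable X : Banach.

Definition dist (x y : X) : R := vnorm X (vadd X x (vopp X y)).

Definition ball (x : X) (r : R) : X -> Prop := fun y => dist y x <= r.

(* diameter: sup of mutual distances (0 for the empty set) *)
Definition diam (E : X -> Prop) : R :=
  sup_set (fun d => exists x y, E x /\ E y /\ d = dist x y).

Definition dist_set (x : X) (L : X -> Prop) : R :=
  inf_set (fun d => exists y, L y /\ d = dist x y).

Definition is_line (L : X -> Prop) : Prop :=
  exists p v, v <> vzero X /\ forall y, L y <-> exists t : R, y = vadd X p (vscal X t v).

Definition beta (E Q : X -> Prop) : R :=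
  if excluded_middle_informative (0 < diam Q /\ exists x, E x /\ Q x) then
    inf_set (fun b => exists L, is_line L /\
      b = sup_set (fun d => exists x, E x /\ Q x /\ d = dist_set x L / diam Q))
  else 0.

Definition is_open (U : X -> Prop) : Prop :=
  forall x, U x -> exists r, 0 < r /\ forall y, dist y x < r -> U y.

Definition connected (S : X -> Prop) : Prop :=
  forall U W : X -> Prop, is_open U -> is_open W ->
    (forall x, S x -> U x \/ W x) ->
    (exists x, S x /\ U x) -> (exists x, S x /\ W x) ->
    exists x, S x /\ U x /\ W x.

Definition is_net (E : X -> Prop) (rho : R) (N : X -> Prop) : Prop :=
  (forall x, N x -> E x) /\
  (forall y z, N y -> N z -> y <> z -> rho <= dist y z) /\
  (forall x, E x -> exists y, N y /\ dist x y < rho).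

Definition bpow (k : Z) : R := powerRZ 2 (- k).

Definition multiresolution_nets (E : X -> Prop) (Xk : Z -> X -> Prop) : Prop :=
  (forall k x, Xk k x -> Xk (k + 1)%Z x) /\
  (forall k, is_net E (bpow k) (Xk k)).

(* the ball of the multiresolution family with index (k,x) and inflation A *)
Definition mball (A : R) (kx : Z * X) : X -> Prop :=
  ball (snd kx) (A * bpow (fst kx)).

(* one-dimensional Hausdorff measure: "H^1(E) <= h" unfolded:
   for every delta > 0, H^1_delta(E) = inf { sum_i diam E_i : E subset U_i E_i,
   diam E_i <= delta } is <= h. *)
Definition H1_delta_le (E : X -> Prop) (delta h : R) : Prop :=
  forall eps, 0 < eps -> exists Es : nat -> X -> Prop,
    (forall x, E x -> exists i, Es i x) /\
    (forall i x y, Es i x -> Es i y -> dist x y <= delta) /\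
    (forall n, sum_f_R0 (fun i => diam (Es i)) n <= h + eps).

Definition H1_le (E : X -> Prop) (h : R) : Prop :=
  forall delta, 0 < delta -> H1_delta_le E delta h.

End Metric.

Arguments dist {X}. Arguments ball {X}. Arguments diam {X}. Arguments beta {X}.
Arguments connected {X}. Arguments multiresolution_nets {X}. Arguments mball {X}.
Arguments H1_le {X}.

Fixpoint lsum {T : Type} (f : T -> R) (l : list T) : R :=
  match l with nil => 0 | cons a l' => f a + lsum f l' end.

(* A ball Q = B(x, A 2^-k) centred on Sigma satisfies beta(Q) diam Q <= min(diam Sigma, A 2^-k)
   (take any line through x), so its term is at most
   A min(diam Sigma, 2^-k) (diam Sigma / A 2^-k)^(s-1).  If beta(Q) > 0 then Sigma lies in 12Q,
   hence diam Sigma <= 24 A 2^-K for the finest level K that occurs, and the last factor decays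
   like 2^(-(K-k)(s-1)).  At a fixed level the 2^-k-separated centres number at most
   6 H^1(Sigma) / min(diam Sigma, 2^-k): around each centre the distance function maps Sigma onto
   [0, 2^-k/3] by connectedness, and the length of these disjoint images is controlled by any
   H^1 cover.  Summing the geometric series gives C(s) = 6 * 24^(s-1) / (1 - 2^(1-s)). *)

From Pilot Require Import Defs.
From Stdlib Require Import Reals ZArith List.
From Stdlib Require Import Lra Lia Classical ClassicalEpsilon.
Open Scope R_scope.

Lemma sup_set_lub (P : R -> Prop) :
  (exists x, P x) -> (exists M, forall x, P x -> x <= M) -> is_lub P (sup_set P).
Proof.
  intros Hne [M HM]. unfold sup_set.
  destruct (excluded_middle_informative _) as [H|H].
  - destruct (constructive_indefinite_description _ H) as [l Hl]; exact Hl.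
  - exfalso; apply H. destruct (completeness P) as [m Hm]; eauto.
    exists M; exact HM.
Qed.

Lemma sup_set_le (P : R -> Prop) M : (forall x, P x -> x <= M) -> 0 <= M -> sup_set P <= M.
Proof.
  intros HM H0. unfold sup_set.
  destruct (excluded_middle_informative _) as [H|H]; [|exact H0].
  destruct (constructive_indefinite_description _ H) as [l Hl]; exact (proj2 Hl M HM).
Qed.

Lemma sup_set_ge0 (P : R -> Prop) : (forall x, P x -> 0 <= x) -> 0 <= sup_set P.
Proof.
  intros HP. unfold sup_set.
  destruct (excluded_middle_informative _) as [H|H]; [|lra].
  destruct (constructive_indefinite_description _ H) as [l [Hub Hleast]]; simpl.
  destruct (classic (exists x, P x)) as [[x Hx]|Hn].
  - specialize (HP x Hx). specialize (Hub x Hx). lra.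
  - assert (l <= l - 1); [|lra].
    apply Hleast. intros x Hx. exfalso; eauto.
Qed.

Lemma le_sup_set (P : R -> Prop) x M : P x -> (forall y, P y -> y <= M) -> x <= sup_set P.
Proof. intros Hx HM. apply (sup_set_lub P); eauto. Qed.

Lemma inf_set_le (P : R -> Prop) x M : P x -> (forall y, P y -> M <= y) -> inf_set P <= x.
Proof.
  intros Hx HM. unfold inf_set.
  assert (- x <= sup_set (fun y => P (- y))); [|lra].
  apply le_sup_set with (M := - M).
  - rewrite Ropp_involutive; exact Hx.
  - intros y Hy. specialize (HM _ Hy). lra.
Qed.

Lemma inf_set_ge0 (P : R -> Prop) : (forall y, P y -> 0 <= y) -> 0 <= inf_set P.
Proof.
  intros HP. unfold inf_set.
  assert (sup_set (fun y => P (- y)) <= 0); [|lra].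
  apply sup_set_le; [|lra]. intros y Hy. specialize (HP _ Hy). lra.
Qed.

Section BanachGeometry.
Variable X : Banach.
Local Notation "a +v b" := (vadd X a b) (at level 50, left associativity).
Local Notation "-v a" := (vopp X a) (at level 35).
Local Notation "0v" := (vzero X).

Lemma vadd_0l (x : X) : 0v +v x = x.
Proof. rewrite vadd_comm, vadd_0; reflexivity. Qed.

Lemma vadd_cancel_l (a x y : X) : a +v x = a +v y -> x = y.
Proof.
  intros H. assert (E : (-v a) +v (a +v x) = (-v a) +v (a +v y)) by (rewrite H; reflexivity).
  rewrite !vadd_assoc, (vadd_comm _ (-v a) a), vadd_opp, !vadd_0l in E. exact E.
Qed.

Lemma vscal_0 (x : X) : vscal X 0 x = 0v.
Proof.
  apply (vadd_cancel_l (vscal X 0 x)). rewrite vadd_0, <- vscal_distr_r, Rplus_0_l. reflexivity.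
Qed.

Lemma vopp_scal (x : X) : -v x = vscal X (-1) x.
Proof.
  apply (vadd_cancel_l x). rewrite vadd_opp. rewrite <- (vscal_1 X x) at 1.
  rewrite <- vscal_distr_r. replace (1 + -1) with 0 by ring. rewrite vscal_0; reflexivity.
Qed.

Lemma vnorm_0 : vnorm X 0v = 0.
Proof. rewrite <- (vscal_0 0v), vnorm_scal, Rabs_R0; ring. Qed.

Lemma vnorm_opp (x : X) : vnorm X (-v x) = vnorm X x.
Proof. rewrite vopp_scal, vnorm_scal, Rabs_left by lra. ring. Qed.

Lemma vnorm_ge0 (x : X) : 0 <= vnorm X x.
Proof.
  pose proof (vnorm_triangle X x (-v x)) as H. rewrite vadd_opp, vnorm_0, vnorm_opp in H. lra.
Qed.

Lemma vnorm_gt0 (v : X) : v <> 0v -> 0 < vnorm X v.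
Proof.
  intros H. destruct (vnorm_ge0 v) as [H'|H']; auto. exfalso; apply H, vnorm_eq0; auto.
Qed.

Lemma vopp_add (a b : X) : -v (a +v b) = (-v a) +v (-v b).
Proof. rewrite !vopp_scal, vscal_distr_v; reflexivity. Qed.

Lemma vopp_opp (a : X) : -v (-v a) = a.
Proof. rewrite !vopp_scal, vscal_assoc. replace (-1 * -1) with 1 by ring. apply vscal_1. Qed.

Lemma dist_sym (x y : X) : Defs.dist x y = Defs.dist y x.
Proof.
  unfold Defs.dist. rewrite <- vnorm_opp, vopp_add, vopp_opp, vadd_comm; reflexivity.
Qed.

Lemma dist_triangle (x y z : X) : Defs.dist x z <= Defs.dist x y + Defs.dist y z.
Proof.
  unfold Defs.dist. eapply Rle_trans; [|apply vnorm_triangle].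
  right. f_equal. rewrite <- vadd_assoc. f_equal.
  rewrite vadd_assoc, (vadd_comm _ (-v y) y), vadd_opp, vadd_0l; reflexivity.
Qed.

Lemma dist_refl (x : X) : Defs.dist x x = 0.
Proof. unfold Defs.dist. rewrite vadd_opp; apply vnorm_0. Qed.

Lemma dist_ge0 (x y : X) : 0 <= Defs.dist x y.
Proof. apply vnorm_ge0. Qed.

Lemma dist_add_l (x u : X) : Defs.dist (x +v u) x = vnorm X u.
Proof.
  unfold Defs.dist. f_equal.
  rewrite (vadd_comm _ x u), <- vadd_assoc, vadd_opp, vadd_0; reflexivity.
Qed.

Lemma diam_ge0 (E : X -> Prop) : 0 <= diam E.
Proof. apply sup_set_ge0. intros r [a [b [_ [_ ->]]]]. apply dist_ge0. Qed.

Lemma dist_le_diam (E : X -> Prop) M x y :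
  (forall a b, E a -> E b -> Defs.dist a b <= M) -> E x -> E y -> Defs.dist x y <= diam E.
Proof.
  intros HM Hx Hy. apply le_sup_set with (M := M); [eauto 7|].
  intros r [a [b [Ha [Hb ->]]]]. auto.
Qed.

Lemma diam_le (E : X -> Prop) M :
  (forall a b, E a -> E b -> Defs.dist a b <= M) -> 0 <= M -> diam E <= M.
Proof. intros HM HM0. apply sup_set_le; [intros r [a [b [Ha [Hb ->]]]]; auto | exact HM0]. Qed.

Lemma diam_gt0_nonzero_vector (E : X -> Prop) : 0 < diam E -> exists v : X, v <> 0v.
Proof.
  intros HE. apply NNPP. intros Hn.
  assert (diam E <= 0); [|lra].
  apply diam_le; [|lra]. intros a b _ _. unfold Defs.dist.
  destruct (classic (a +v -v b = 0v)) as [->|Hv]; [rewrite vnorm_0; lra|].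
  exfalso; eauto.
Qed.

Lemma ball_radius_le_diam (x : X) R :
  0 <= R -> 0 < diam (Defs.ball x R) -> R <= diam (Defs.ball x R).
Proof.
  intros HR HD. destruct (diam_gt0_nonzero_vector _ HD) as [v Hv].
  pose proof (vnorm_gt0 v Hv) as Hnv.
  set (u := vscal X (R / vnorm X v) v).
  assert (Hu : vnorm X u = R).
  { unfold u. rewrite vnorm_scal, Rabs_right; [field; lra|].
    apply Rle_ge, Rmult_le_pos; [lra|left; apply Rinv_0_lt_compat; lra]. }
  apply Rle_trans with (Defs.dist (x +v u) x); [rewrite dist_add_l; lra|].
  apply dist_le_diam with (M := 2 * R).
  - intros a b Ha Hb. unfold Defs.ball in *.
    pose proof (dist_triangle a x b) as Htri. rewrite (dist_sym x b) in Htri. lra.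
  - unfold Defs.ball. rewrite dist_add_l; lra.
  - unfold Defs.ball. rewrite dist_refl; lra.
Qed.

End BanachGeometry.

Lemma connected_dist_onto (X : Banach) (S : X -> Prop) p q t :
  connected S -> S p -> S q -> 0 <= t <= Defs.dist q p ->
  exists x, S x /\ Defs.dist x p = t.
Proof.
  intros Hc Hp Hq Ht.
  destruct (Req_dec t 0) as [->|Ht0].
  { exists p; split; auto. apply dist_refl. }
  apply NNPP; intros Hn.
  destruct (Hc (fun x => Defs.dist x p < t) (fun x => t < Defs.dist x p)) as [x [_ [H1 H2]]].
  - intros x Hx. exists (t - Defs.dist x p). split; [lra|].
    intros y Hy. pose proof (dist_triangle X y x p). lra.
  - intros x Hx. exists (Defs.dist x p - t). split; [lra|].
    intros y Hy. pose proof (dist_triangle X x y p). rewrite dist_sym in Hy. lra.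
  - intros x Hx. destruct (Rtotal_order (Defs.dist x p) t) as [H|[H|H]]; auto.
    exfalso; eauto.
  - exists p; split; auto. rewrite dist_refl; lra.
  - exists q; split; auto. destruct (Req_dec (Defs.dist q p) t) as [E|E]; [exfalso; eauto|lra].
  - lra.
Qed.

Lemma sum_f_R0_le_index (g : nat -> R) n N :
  (forall i, 0 <= g i) -> (n <= N)%nat -> sum_f_R0 g n <= sum_f_R0 g N.
Proof.
  intros Hg. induction N; intros H.
  - replace n with 0%nat by lia. lra.
  - destruct (Nat.eq_dec n (S N)) as [->|E]; [lra|].
    simpl. specialize (Hg (S N)). specialize (IHN ltac:(lia)). lra.
Qed.

Lemma sum_f_R0_le_gap (f g : nat -> R) N j :
  (forall i, g i <= f i) -> (j <= N)%nat -> sum_f_R0 g N + (f j - g j) <= sum_f_R0 f N.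
Proof.
  intros Hfg. induction N; intros Hj.
  - replace j with 0%nat by lia. simpl. lra.
  - simpl. destruct (Nat.eq_dec j (S N)) as [->|E].
    + pose proof (sum_growing g f N Hfg). lra.
    + specialize (IHN ltac:(lia)). specialize (Hfg (S N)). lra.
Qed.

Lemma sum_half_powers n : sum_f_R0 (fun j => (/2)^(S j)) n = 1 - (/2)^(S n).
Proof. induction n; simpl in *; [field|rewrite IHn; field]. Qed.

(* Length of [lo, up] to the left of x. *)
Definition overlap (lo up x : R) : R := Rmax 0 (Rmin (x - lo) (up - lo)).

Lemma overlap_ge0 lo up x : 0 <= overlap lo up x.
Proof. apply Rmax_l. Qed.

Lemma overlap_le lo up x : lo <= up -> overlap lo up x <= up - lo.
Proof. intros. unfold overlap, Rmax, Rmin; repeat destruct Rle_dec; lra. Qed.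

Lemma overlap_le_compat lo up x y : x <= y -> overlap lo up x <= overlap lo up y.
Proof. intros. unfold overlap, Rmax, Rmin; repeat destruct Rle_dec; lra. Qed.

Lemma overlap_shift lo up x y :
  lo <= x -> x <= y -> y <= up -> overlap lo up y = overlap lo up x + (y - x).
Proof. intros. unfold overlap, Rmax, Rmin; repeat destruct Rle_dec; lra. Qed.

Lemma sum_overlap_enlarged_le (a w : nat -> R) eps x n :
  0 < eps -> (forall j, 0 <= w j) ->
  sum_f_R0 (fun i => overlap (a i - eps * (/2)^(S i) / 2) (a i + w i + eps * (/2)^(S i) / 2) x) n
    <= sum_f_R0 w n + eps.
Proof.
  intros He Hw. apply Rle_trans with (sum_f_R0 (fun i => w i + (/2)^(S i) * eps) n).
  - apply sum_growing. intro i. pose proof (Hw i). pose proof (pow_lt (/2) (S i) ltac:(lra)).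
    eapply Rle_trans; [apply overlap_le; nra|]. lra.
  - rewrite sum_plus, <- scal_sum, sum_half_powers.
    pose proof (pow_lt (/2) (S n) ltac:(lra)). nra.
Qed.

(* Countable subadditivity of length on [0, c]: the intervals are enlarged by eps 2^-(j+2)
   and the supremum of the points up to which the partial sums dominate is shown to be c. *)
Lemma interval_cover_length (c eps : R) (a w : nat -> R) :
  0 <= c -> 0 < eps -> (forall j, 0 <= w j) ->
  (forall t, 0 <= t <= c -> exists j, a j <= t <= a j + w j) ->
  exists n, c <= sum_f_R0 w n + eps.
Proof.
  intros Hc He Hw Hcov.
  set (e := fun j => eps * (/2)^(S j) / 2).
  assert (He_pos : forall j, 0 < e j).
  { intro j. unfold e. pose proof (pow_lt (/2) (S j) ltac:(lra)). nra. }
  set (lo := fun j => a j - e j). set (up := fun j => a j + w j + e j).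
  set (lam := fun j x => overlap (lo j) (up j) x).
  set (good := fun x => 0 <= x <= c /\ exists n, x <= sum_f_R0 (fun i => lam i x) n).
  assert (Hgood0 : good 0).
  { split; [lra|]. exists 0%nat. apply overlap_ge0. }
  assert (Hlub : is_lub good (sup_set good)).
  { apply sup_set_lub; [eauto|]. exists c. intros x [Hx _]; lra. }
  set (sg := sup_set good) in *.
  assert (Hsg : 0 <= sg <= c).
  { split; [apply (proj1 Hlub); exact Hgood0|]. apply (proj2 Hlub). intros x [Hx _]; lra. }
  destruct (Hcov sg Hsg) as [j Hj]. pose proof (He_pos j) as Hej.
  assert (Hlo : lo j < sg) by (unfold lo; lra).
  assert (Hup : sg < up j) by (unfold up; lra).
  destruct (classic (exists x, good x /\ lo j < x)) as [[x [Hx Hxl]]|Hn].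
  2:{ exfalso. assert (sg <= lo j); [|lra]. apply (proj2 Hlub). intros x Hx.
      apply Rnot_lt_le. intro Hlt. apply Hn; eauto. }
  assert (Hxs : x <= sg) by (apply (proj1 Hlub); auto).
  destruct Hx as [Hx [n Hn]].
  set (x' := Rmin c (up j)).
  assert (Hxx' : x <= x') by (unfold x', Rmin; destruct Rle_dec; lra).
  assert (Hx'up : x' <= up j) by apply Rmin_r.
  assert (Hx'c : x' <= c) by apply Rmin_l.
  assert (Hgood' : good x').
  { split; [lra|]. exists (Nat.max n j).
    pose proof (sum_f_R0_le_index (fun i => lam i x) n (Nat.max n j)
                  (fun i => overlap_ge0 _ _ _) ltac:(lia)).
    pose proof (sum_f_R0_le_gap (fun i => lam i x') (fun i => lam i x) (Nat.max n j) j
                  (fun i => overlap_le_compat (lo i) (up i) x x' Hxx') ltac:(lia)).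
    unfold lam in *. rewrite (overlap_shift (lo j) (up j) x x') in * by lra.
    lra. }
  assert (Hx's : x' <= sg) by (apply (proj1 Hlub); auto).
  unfold x', Rmin in *. destruct (Rle_dec c (up j)); [|lra].
  destruct Hgood' as [_ [m Hm]]. exists m.
  pose proof (sum_overlap_enlarged_le a w eps c m He Hw). unfold lam, lo, up, e in Hm. lra.
Qed.

Section ListSums.
Context {T : Type}.

Lemma lsum_le (f g : T -> R) l : (forall x, In x l -> f x <= g x) -> lsum f l <= lsum g l.
Proof.
  induction l as [|a l IH]; simpl; intros H; [lra|].
  pose proof (H a (or_introl eq_refl)). specialize (IH (fun x Hx => H x (or_intror Hx))). lra.
Qed.

Lemma lsum_const (k : R) (l : list T) : lsum (fun _ => k) l = INR (length l) * k.
Proof. induction l; simpl; [ring|]. rewrite IHl. destruct (length l); simpl; ring. Qed.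

Lemma lsum_zero (f : T -> R) l : (forall x, In x l -> f x = 0) -> lsum f l = 0.
Proof. induction l; simpl; intros H; [auto|]. rewrite H, IHl; auto. ring. Qed.

Lemma lsum_scal (k : R) (f : T -> R) l : lsum (fun x => k * f x) l = k * lsum f l.
Proof. induction l; simpl; [ring|]. rewrite IHl; ring. Qed.

Lemma lsum_sum_f_R0 (F : T -> nat -> R) l N :
  lsum (fun p => sum_f_R0 (F p) N) l = sum_f_R0 (fun j => lsum (fun p => F p j) l) N.
Proof.
  induction l; simpl.
  - induction N; simpl; auto. rewrite <- IHN; ring.
  - rewrite IHl, <- sum_plus. reflexivity.
Qed.

Lemma lsum_filter (f : T -> R) (p : T -> bool) l :
  (forall x, In x l -> p x = false -> f x = 0) -> lsum f l = lsum f (filter p l).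
Proof.
  induction l as [|a l IH]; simpl; intros H; [reflexivity|].
  rewrite IH by auto. destruct (p a) eqn:E; simpl; [reflexivity|].
  rewrite H by auto. ring.
Qed.

Lemma exists_uniform_index (P : T -> nat -> Prop) l :
  (forall p n m, (n <= m)%nat -> P p n -> P p m) ->
  (forall p, In p l -> exists n, P p n) -> exists N, forall p, In p l -> P p N.
Proof.
  intros Hm. induction l as [|a l IH]; intros H.
  - exists 0%nat; intros p [].
  - destruct (H a (or_introl eq_refl)) as [n Hn].
    destruct IH as [N HN]; [intros; apply H; simpl; auto|].
    exists (Nat.max n N). intros p [<-|Hp].
    + apply (Hm a n); [lia|exact Hn].
    + apply (Hm p N); [lia|auto].
Qed.

End ListSums.

Section Packing.
Variables (X : Banach) (S : X -> Prop) (Es : nat -> X -> Prop) (c delta : R).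
Hypothesis Es_cover : forall x, S x -> exists i, Es i x.
Hypothesis Es_small : forall i x y, Es i x -> Es i y -> Defs.dist x y <= delta.

Definition touches (p : X) (j : nat) : Prop :=
  exists x, S x /\ Es j x /\ Defs.dist x p <= c.

Definition touching_diam (p : X) (j : nat) : R :=
  if excluded_middle_informative (touches p j) then diam (Es j) else 0.

Lemma touching_diam_ge0 p j : 0 <= touching_diam p j.
Proof. unfold touching_diam; destruct excluded_middle_informative; [apply diam_ge0|lra]. Qed.

Let Es_dist_le_diam j x y : Es j x -> Es j y -> Defs.dist x y <= diam (Es j).
Proof. intros. apply dist_le_diam with (M := delta); auto. intros; eapply Es_small; eauto. Qed.

(* The distances to p of the points of S near p fill [0, c], and a covering set touching p
   contributes an interval of length 2 diam to this image. *)
Lemma touching_diam_cover p q eps :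
  connected S -> S p -> S q -> 0 <= c <= Defs.dist q p -> 0 < eps ->
  exists n, c <= sum_f_R0 (fun j => 2 * touching_diam p j) n + eps.
Proof.
  intros Hconn Sp Sq Hc He.
  set (a := fun j => match excluded_middle_informative (touches p j) with
                     | left H => Defs.dist (proj1_sig (constructive_indefinite_description _ H)) p
                                 - diam (Es j)
                     | right _ => 0 end).
  apply (interval_cover_length c eps a); try lra.
  - intro j; pose proof (touching_diam_ge0 p j); lra.
  - intros t Ht.
    destruct (connected_dist_onto X S p q t Hconn Sp Sq ltac:(lra)) as [x [Sx <-]].
    destruct (Es_cover x Sx) as [j Ej]. exists j.
    assert (Hj : touches p j) by (exists x; repeat split; auto; lra).
    unfold a, touching_diam. destruct excluded_middle_informative as [H|]; [|contradiction].
    destruct (constructive_indefinite_description _ H) as [x0 Hx0]; simpl.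
    destruct Hx0 as [_ [Ex0 _]].
    pose proof (dist_triangle X x x0 p). pose proof (dist_triangle X x0 x p).
    pose proof (Es_dist_le_diam j x x0 Ej Ex0). rewrite (dist_sym X x0 x) in *. lra.
Qed.

Lemma lsum_touching_diam_le ps j :
  delta < c -> NoDup ps ->
  (forall p p', In p ps -> In p' ps -> p <> p' -> 3 * c <= Defs.dist p p') ->
  lsum (fun p => touching_diam p j) ps <= diam (Es j).
Proof.
  intros Hdelta. induction ps as [|a ps IH]; simpl; intros Hnd Hsep; [apply diam_ge0|].
  inversion Hnd as [|? ? Ha Hnd']; subst.
  unfold touching_diam at 1. destruct excluded_middle_informative as [[x [_ [Ex Hx]]]|Hm].
  - rewrite lsum_zero; [lra|]. intros p Hp. unfold touching_diam.
    destruct excluded_middle_informative as [[y [_ [Ey Hy]]]|]; [exfalso|reflexivity].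
    assert (a <> p) by (intros ->; auto).
    pose proof (Hsep a p (or_introl eq_refl) (or_intror Hp) ltac:(assumption)).
    pose proof (dist_triangle X a x p). pose proof (dist_triangle X x y p).
    pose proof (Es_small j x y Ex Ey). rewrite dist_sym in Hx. lra.
  - assert (lsum (fun p => touching_diam p j) ps <= diam (Es j)); [|lra].
    apply IH; auto.
Qed.

End Packing.

Lemma separated_points_H1 (X : Banach) (S : X -> Prop) h c (ps : list X) :
  connected S -> H1_le S h -> 0 < c -> NoDup ps ->
  (forall p, In p ps -> S p /\ exists q, S q /\ c <= Defs.dist q p) ->
  (forall p p', In p ps -> In p' ps -> p <> p' -> 3 * c <= Defs.dist p p') ->
  INR (length ps) * c <= 2 * h.
Proof.
  intros Hconn HH Hc Hnd Hps Hsep.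
  set (N := INR (length ps)). assert (HN : 0 <= N) by apply pos_INR.
  apply Rle_plus_epsilon. intros eps0 He0.
  set (eps := eps0 / (N + 2)).
  assert (He : 0 < eps) by (apply Rdiv_lt_0_compat; lra).
  destruct (HH (c/2) ltac:(lra) eps He) as [Es [Hcov [Hsmall Hsum]]].
  destruct (exists_uniform_index
              (fun p n => c <= sum_f_R0 (fun j => 2 * touching_diam X S Es c p j) n + eps) ps)
    as [M HM].
  { intros p n m Hnm Hn.
    assert (sum_f_R0 (fun j => 2 * touching_diam X S Es c p j) n
            <= sum_f_R0 (fun j => 2 * touching_diam X S Es c p j) m); [|lra].
    apply sum_f_R0_le_index; [|exact Hnm]. intro i.
    pose proof (touching_diam_ge0 X S Es c p i). lra. }
  { intros p Hp. destruct (Hps p Hp) as [Sp [q [Sq Hq]]].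
    apply (touching_diam_cover X S Es c (c/2) Hcov Hsmall p q eps Hconn Sp Sq); lra. }
  assert (H1 : lsum (fun _ => c - eps) ps
               <= lsum (fun p => sum_f_R0 (fun j => 2 * touching_diam X S Es c p j) M) ps).
  { apply lsum_le. intros p Hp. specialize (HM p Hp). lra. }
  rewrite lsum_const, lsum_sum_f_R0 in H1.
  assert (H2 : sum_f_R0 (fun j => lsum (fun p => 2 * touching_diam X S Es c p j) ps) M
               <= sum_f_R0 (fun j => diam (Es j) * 2) M).
  { apply sum_growing. intro j. rewrite lsum_scal.
    pose proof (lsum_touching_diam_le X S Es c (c/2) Hsmall ps j ltac:(lra) Hnd Hsep). lra. }
  rewrite <- scal_sum in H2. specialize (Hsum M).
  assert (Hbound : N * c <= 2 * h + eps * (N + 2)) by (fold N in H1; nra).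
  unfold eps in Hbound. replace (eps0 / (N + 2) * (N + 2)) with eps0 in Hbound by (field; lra).
  lra.
Qed.

Lemma H1_le_ge0 (X : Banach) (S : X -> Prop) h : H1_le S h -> 0 <= h.
Proof.
  intros HH. apply Rle_plus_epsilon. intros eps He.
  destruct (HH 1 ltac:(lra) eps He) as [Es [_ [_ Hsum]]].
  specialize (Hsum 0%nat). pose proof (diam_ge0 X (Es 0%nat)). simpl in Hsum. lra.
Qed.

Lemma connected_dist_le_H1 (X : Banach) (S : X -> Prop) h y z :
  connected S -> H1_le S h -> S y -> S z -> Defs.dist y z <= 2 * h.
Proof.
  intros Hconn HH Sy Sz.
  destruct (dist_ge0 X y z) as [Hyz|<-]; [|pose proof (H1_le_ge0 X S h HH); lra].
  pose proof (separated_points_H1 X S h (Defs.dist y z) (z :: nil) Hconn HH Hyz) as H.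
  simpl in H. rewrite Rmult_1_l in H. apply H.
  - repeat constructor. intros [].
  - intros p [<-|[]]. split; auto. exists y; split; auto; lra.
  - intros p p' [<-|[]] [<-|[]] Hne; congruence.
Qed.

Lemma connected_dist_le_diam (X : Banach) (S : X -> Prop) h y z :
  connected S -> H1_le S h -> S y -> S z -> Defs.dist y z <= diam S.
Proof.
  intros Hconn HH. apply dist_le_diam with (M := 2 * h).
  intros; apply (connected_dist_le_H1 X S); auto.
Qed.

Lemma connected_diam_le_H1 (X : Banach) (S : X -> Prop) h :
  connected S -> H1_le S h -> diam S <= 2 * h.
Proof.
  intros Hconn HH. apply diam_le; [|pose proof (H1_le_ge0 X S h HH); lra].
  intros; apply (connected_dist_le_H1 X S); auto.
Qed.

Lemma exists_far_point (X : Banach) (S : X -> Prop) p c :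
  0 <= c -> 2 * c < diam S -> exists q, S q /\ c <= Defs.dist q p.
Proof.
  intros Hc Hd. apply NNPP. intros Hn.
  assert (diam S <= 2 * c); [|lra].
  apply diam_le; [|lra]. intros y z Sy Sz.
  assert (Hy : Defs.dist y p < c) by (apply Rnot_le_lt; intro; apply Hn; eauto).
  assert (Hz : Defs.dist z p < c) by (apply Rnot_le_lt; intro; apply Hn; eauto).
  pose proof (dist_triangle X y p z). rewrite (dist_sym X p z) in *. lra.
Qed.

Lemma beta_gt0_diam_gt0 (X : Banach) (E Q : X -> Prop) : 0 < beta E Q -> 0 < diam Q.
Proof. unfold beta. destruct excluded_middle_informative as [[HQ _]|]; [auto|lra]. Qed.

(* The line through the centre in any direction is within distance min(m, r) of every
   point of S in the ball. *)
Lemma beta_mul_diam_ball_le (X : Banach) (S : X -> Prop) x r m :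
  0 <= r -> S x -> (forall y, S y -> Defs.dist y x <= m) ->
  beta S (Defs.ball x r) * diam (Defs.ball x r) <= Rmin m r.
Proof.
  intros HR Sx Hm.
  set (D := diam (Defs.ball x r)).
  assert (Hmin : 0 <= Rmin m r).
  { apply Rmin_glb; auto. specialize (Hm x Sx). rewrite dist_refl in Hm. exact Hm. }
  unfold beta. fold D. destruct excluded_middle_informative as [[HD _]|]; [|lra].
  destruct (diam_gt0_nonzero_vector X _ HD) as [v Hv].
  set (L0 := fun y => exists t : R, y = vadd X x (vscal X t v)).
  assert (HL0 : is_line X L0) by (exists x, v; split; auto; intro y; tauto).
  assert (HxL0 : L0 x) by (exists 0; rewrite vscal_0, vadd_0; auto).
  set (b0 := sup_set (fun d => exists y, S y /\ Defs.ball x r y /\ d = dist_set X y L0 / D)).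
  assert (Hb0 : b0 <= Rmin m r / D).
  { apply sup_set_le; [|apply Rle_mult_inv_pos; lra].
    intros d [y [Sy [By ->]]]. apply Rmult_le_compat_r; [left; apply Rinv_0_lt_compat; lra|].
    apply Rle_trans with (Defs.dist y x).
    - apply inf_set_le with (M := 0); [exists x; auto|]. intros z [w [_ ->]]. apply dist_ge0.
    - apply Rmin_glb; [apply Hm; exact Sy|exact By]. }
  assert (Hbeta : inf_set (fun b => exists L, is_line X L /\
            b = sup_set (fun d => exists y, S y /\ Defs.ball x r y /\ d = dist_set X y L / D))
          <= b0).
  { apply inf_set_le with (M := 0); [exists L0; split; auto|].
    intros y [L [_ ->]]. apply sup_set_ge0. intros d [z [_ [_ ->]]].
    apply Rle_mult_inv_pos; [|lra]. apply inf_set_ge0. intros w [w' [_ ->]]. apply dist_ge0. }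
  apply (Rmult_le_reg_r (/ D)); [apply Rinv_0_lt_compat; lra|].
  rewrite Rmult_assoc, Rinv_r by lra. lra.
Qed.

Lemma rpow_mul_le b D m r s :
  0 < b -> b * D <= m -> 0 < r <= D -> 1 < s ->
  rpow b s * D <= m * Rpower (m / r) (s - 1).
Proof.
  intros Hb HbD HR Hs. unfold rpow. destruct Rlt_dec; [|lra].
  assert (Hm : 0 < m) by nra.
  assert (Hbm : b <= m / D) by (apply (Rmult_le_reg_r D); [lra|]; field_simplify; lra).
  assert (E : Rpower (m / D) s = m / D * Rpower (m / D) (s - 1)).
  { replace s with (1 + (s - 1)) at 1 by ring.
    rewrite Rpower_plus, Rpower_1 by (apply Rdiv_lt_0_compat; lra). reflexivity. }
  assert (E1 : Rpower b s <= Rpower (m / D) s) by (apply Rle_Rpower_l; lra).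
  assert (E2 : Rpower (m / D) (s - 1) <= Rpower (m / r) (s - 1)).
  { apply Rle_Rpower_l; [lra|]. split; [apply Rdiv_lt_0_compat; lra|].
    apply Rmult_le_compat_l; [lra|]. apply Rinv_le_contravar; lra. }
  apply Rle_trans with (Rpower (m / D) s * D); [apply Rmult_le_compat_r; lra|].
  rewrite E. replace (m / D * Rpower (m / D) (s - 1) * D) with (m * Rpower (m / D) (s - 1))
    by (field; lra).
  apply Rmult_le_compat_l; lra.
Qed.

Lemma beta_rpow_diam_ball_le (X : Banach) (S : X -> Prop) x r m s :
  0 < r -> 1 < s -> S x -> (forall y, S y -> Defs.dist y x <= m) ->
  rpow (beta S (Defs.ball x r)) s * diam (Defs.ball x r)
    <= Rmin m r * Rpower (Rmin m r / r) (s - 1).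
Proof.
  intros Hr Hs Sx Hm.
  destruct (Rlt_dec 0 (beta S (Defs.ball x r))) as [Hb|Hb].
  - apply rpow_mul_le; auto. apply beta_mul_diam_ball_le; auto; lra.
    split; [auto|]. apply ball_radius_le_diam; [lra|]. apply (beta_gt0_diam_gt0 X S); auto.
  - unfold rpow. destruct Rlt_dec; [contradiction|].
    assert (0 <= Rmin m r).
    { apply Rmin_glb; [|lra]. specialize (Hm x Sx). rewrite dist_refl in Hm. exact Hm. }
    assert (0 < Rpower (Rmin m r / r) (s - 1)) by apply exp_pos. nra.
Qed.

Lemma diam_le_ball (X : Banach) (S : X -> Prop) x r :
  0 <= r -> (forall y, S y -> Defs.ball x r y) -> diam S <= 2 * r.
Proof.
  intros Hr HS. apply diam_le; [|lra]. intros y z Sy Sz.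
  pose proof (HS y Sy). pose proof (HS z Sz). unfold Defs.ball in *.
  pose proof (dist_triangle X y x z). rewrite (dist_sym X x z) in *. lra.
Qed.

Lemma bpow_gt0 k : 0 < bpow k.
Proof. apply powerRZ_lt; lra. Qed.

Lemma bpow_sub_nat K j : bpow K = bpow (K - Z.of_nat j) * (/2)^j.
Proof.
  unfold bpow. replace (- K)%Z with (- (K - Z.of_nat j) + - Z.of_nat j)%Z by lia.
  rewrite powerRZ_add by lra. f_equal. rewrite powerRZ_neg', <- pow_powerRZ, pow_inv. reflexivity.
Qed.

Lemma Rpower_pow_l (b z : R) j : 0 < b -> Rpower (b ^ j) z = Rpower b z ^ j.
Proof.
  intros Hb. rewrite <- (Rpower_pow j b Hb), Rpower_mult, Rmult_comm, <- Rpower_mult.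
  apply Rpower_pow, exp_pos.
Qed.

Lemma NoDup_map_snd_level {T : Type} (l : list (Z * T)) k :
  NoDup l -> (forall e, In e l -> fst e = k) -> NoDup (map snd l).
Proof.
  induction l as [|[k' x] l IH]; intros Hnd Hk; simpl; [constructor|].
  inversion Hnd as [|? ? Hx Hnd']; subst. constructor.
  - intros Hin. apply in_map_iff in Hin. destruct Hin as [[k'' y] [Hy Hin]]. simpl in Hy; subst.
    pose proof (Hk _ (or_intror Hin)). pose proof (Hk _ (or_introl eq_refl)).
    simpl in *; subst. contradiction.
  - apply IH; auto. intros; apply Hk; simpl; auto.
Qed.

Lemma lsum_by_levels {T : Type} (f : Z * T -> R) (B : nat -> R) K n : forall l,
  NoDup l -> (forall e, In e l -> (K - Z.of_nat n <= fst e <= K)%Z) ->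
  (forall j l', (j <= n)%nat -> NoDup l' -> incl l' l ->
     (forall e, In e l' -> fst e = (K - Z.of_nat j)%Z) -> lsum f l' <= B j) ->
  lsum f l <= sum_f_R0 B n.
Proof.
  induction n as [|n IH]; intros l Hnd Hr HB.
  - apply HB; auto. intros x Hx; auto. intros e He. specialize (Hr e He). simpl in Hr. lia.
  - set (at_n := fun e : Z * T => Z.eqb (fst e) (K - Z.of_nat (S n))).
    assert (Hsplit : lsum f l
                     = lsum f (filter at_n l) + lsum f (filter (fun e => negb (at_n e)) l)).
    { clear. induction l as [|a l IH]; simpl; [ring|]. destruct (at_n a); simpl; rewrite IH; ring. }
    rewrite Hsplit. simpl sum_f_R0.
    assert (lsum f (filter at_n l) <= B (S n)).
    { apply HB; auto using NoDup_filter.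
      - intros x Hx. apply filter_In in Hx; tauto.
      - intros e He. apply filter_In in He. apply Z.eqb_eq, He. }
    assert (lsum f (filter (fun e => negb (at_n e)) l) <= sum_f_R0 B n); [|lra].
    apply IH; auto using NoDup_filter.
    + intros e He. apply filter_In in He. destruct He as [He Hp]. specialize (Hr e He).
      unfold at_n in Hp. destruct (Z.eqb_spec (fst e) (K - Z.of_nat (S n))); [discriminate|lia].
    + intros j l' Hj Hnd' Hinc Hl'. apply HB; auto.
      intros x Hx. apply Hinc, filter_In in Hx; tauto.
Qed.

Lemma list_level_range {T : Type} (l : list (Z * T)) : l <> nil ->
  exists K m, (exists e, In e l /\ fst e = K) /\ forall e, In e l -> (m <= fst e <= K)%Z.
Proof.
  induction l as [|a l IH]; intros H; [congruence|].
  destruct (classic (l = nil)) as [->|Hne].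
  - exists (fst a), (fst a). split; [exists a; simpl; auto|]. intros e [->|[]]; lia.
  - destruct (IH Hne) as [K [m [[e0 [He0 HK0]] HKm]]].
    exists (Z.max (fst a) K), (Z.min (fst a) m). split.
    + destruct (Z.le_ge_cases (fst a) K).
      * exists e0. split; [simpl; auto|lia].
      * exists a. split; [simpl; auto|lia].
    + intros e [->|He]; [lia|]. specialize (HKm e He). lia.
Qed.

Lemma sum_geometric_le q n : 0 < q < 1 -> sum_f_R0 (fun j => q ^ j) n <= / (1 - q).
Proof.
  intros Hq. pose proof (GP_finite q n). pose proof (pow_lt q (n + 1) ltac:(lra)).
  apply (Rmult_le_reg_r (1 - q)); [lra|]. rewrite Rinv_l by lra. nra.
Qed.

Lemma Rpower_half_lt1 z : 0 < z -> Rpower (/2) z < 1.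
Proof.
  intros Hz. apply Rlt_le_trans with (Rpower 1 z); [apply Rlt_Rpower_l; lra|].
  unfold Rpower. rewrite ln_1, Rmult_0_r, exp_0. lra.
Qed.

Definition beta_weight {X : Banach} (S : X -> Prop) (A s : R) (kx : Z * X) : R :=
  rpow (beta S (mball A kx)) s * diam (mball A kx).

Section MultiresolutionSum.
Variables (X : Banach) (Sig : X -> Prop) (Xk : Z -> X -> Prop) (A h s : R).
Hypotheses (Sig_connected : connected Sig) (A_gt1 : 1 < A) (s_gt1 : 1 < s)
  (Sig_nets : multiresolution_nets Sig Xk) (Sig_H1 : H1_le Sig h).

Let Sig_dist_le_diam y z : Sig y -> Sig z -> Defs.dist y z <= diam Sig.
Proof. apply (connected_dist_le_diam X Sig h); auto. Qed.

(* Below scale 2^-k a net point is alone; above it, the net points are 3c-separated for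
   c = 2^-k / 3 and Sig reaches distance c from each of them. *)
Lemma net_level_count k ps :
  NoDup ps -> (forall p, In p ps -> Xk k p) ->
  INR (length ps) * Rmin (diam Sig) (bpow k) <= 6 * h.
Proof.
  intros Hnd Hps. destruct Sig_nets as [_ Hnet]. destruct (Hnet k) as [HinS [Hsep _]].
  pose proof (H1_le_ge0 X Sig h Sig_H1). pose proof (bpow_gt0 k).
  pose proof (connected_diam_le_H1 X Sig h Sig_connected Sig_H1).
  destruct (Rlt_le_dec (diam Sig) (bpow k)) as [Hsmall|Hbig].
  - rewrite Rmin_left by lra.
    destruct ps as [|p [|p' ps]]; simpl.
    + lra.
    + pose proof (diam_ge0 X Sig). lra.
    + exfalso. inversion Hnd as [|? ? Hp _]; subst.
      assert (Hne : p <> p') by (intros ->; apply Hp; simpl; auto).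
      assert (Xp : Xk k p) by (apply Hps; simpl; auto).
      assert (Xp' : Xk k p') by (apply Hps; simpl; auto).
      pose proof (Hsep p p' Xp Xp' Hne).
      pose proof (Sig_dist_le_diam p p' (HinS p Xp) (HinS p' Xp')).
      lra.
  - rewrite Rmin_right by lra.
    assert (INR (length ps) * (bpow k / 3) <= 2 * h); [|lra].
    apply separated_points_H1 with (S := Sig); auto; [lra| |].
    + intros p Hp. split; [auto|]. apply exists_far_point; lra.
    + intros p p' Hp Hp' Hne. pose proof (Hsep p p' (Hps p Hp) (Hps p' Hp') Hne). lra.
Qed.

Lemma beta_weight_le K j x :
  Xk (K - Z.of_nat j)%Z x -> diam Sig <= 24 * A * bpow K ->
  beta_weight Sig A s ((K - Z.of_nat j)%Z, x)
    <= A * Rmin (diam Sig) (bpow (K - Z.of_nat j))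
         * (Rpower 24 (s - 1) * Rpower (/2) (s - 1) ^ j).
Proof.
  intros Hx HK. set (k := (K - Z.of_nat j)%Z) in *. set (d := diam Sig) in *.
  assert (Sx : Sig x) by (destruct Sig_nets as [_ Hnet]; apply (proj1 (Hnet k)), Hx).
  pose proof (bpow_gt0 k). set (r := A * bpow k).
  assert (Hr : 0 < r) by (unfold r; nra).
  assert (Hd : 0 <= d) by apply diam_ge0.
  assert (Hterm := beta_rpow_diam_ball_le X Sig x r d s Hr s_gt1 Sx
                     (fun y Sy => Sig_dist_le_diam y x Sy Sx)).
  unfold beta_weight, mball; simpl. fold r.
  assert (Hmin : Rmin d r <= A * Rmin d (bpow k)) by (unfold r, Rmin; repeat destruct Rle_dec; nra).
  assert (HW : 0 < Rpower 24 (s - 1) * Rpower (/2) (s - 1) ^ j).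
  { apply Rmult_lt_0_compat; [apply exp_pos|apply pow_lt, exp_pos]. }
  destruct (Rle_lt_or_eq_dec 0 (Rmin d r) (Rmin_glb _ _ _ Hd (Rlt_le _ _ Hr))) as [Hpos|Hzero].
  - eapply Rle_trans; [exact Hterm|].
    assert (Rpower (Rmin d r / r) (s - 1) <= Rpower 24 (s - 1) * Rpower (/2) (s - 1) ^ j).
    { rewrite <- Rpower_pow_l, Rpower_mult_distr by (try apply pow_lt; lra).
      apply Rle_Rpower_l; [lra|]. split; [apply Rdiv_lt_0_compat; lra|].
      apply (Rmult_le_reg_r r); [lra|]. unfold Rdiv. rewrite Rmult_assoc, Rinv_l by lra.
      pose proof (Rmin_l d r). rewrite (bpow_sub_nat K j) in HK. fold k in HK.
      replace (24 * A * (bpow k * (/2)^j)) with (24 * (/2)^j * r) in HK by (unfold r; ring).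
      fold r. lra. }
    apply Rmult_le_compat; try lra. left; apply exp_pos.
  - rewrite <- Hzero in Hterm. rewrite Rmult_0_l in Hterm. eapply Rle_trans; [exact Hterm|].
    apply Rmult_le_pos; [|lra]. apply Rmult_le_pos; [lra|]. apply Rmin_glb; lra.
Qed.

Lemma level_sum_le K j l :
  NoDup l -> (forall e, In e l -> fst e = (K - Z.of_nat j)%Z /\ Xk (fst e) (snd e)) ->
  diam Sig <= 24 * A * bpow K ->
  lsum (beta_weight Sig A s) l
    <= 6 * h * A * (Rpower 24 (s - 1) * Rpower (/2) (s - 1) ^ j).
Proof.
  intros Hnd Hl HK. set (k := (K - Z.of_nat j)%Z) in *.
  set (W := Rpower 24 (s - 1) * Rpower (/2) (s - 1) ^ j).
  assert (HW : 0 <= W) by (left; apply Rmult_lt_0_compat; [apply exp_pos|apply pow_lt, exp_pos]).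
  apply Rle_trans with (lsum (fun _ => A * Rmin (diam Sig) (bpow k) * W) l).
  { apply lsum_le. intros [k' x] He. destruct (Hl _ He) as [Hk Hx]. simpl in Hk, Hx. subst k'.
    apply beta_weight_le; auto. }
  rewrite lsum_const.
  assert (Hcount : INR (length (map snd l)) * Rmin (diam Sig) (bpow k) <= 6 * h).
  { apply net_level_count.
    - apply NoDup_map_snd_level with k; auto. intros e He; apply (Hl e He).
    - intros p Hp. apply in_map_iff in Hp. destruct Hp as [e [<- He]].
      destruct (Hl e He) as [Hk Hx]. rewrite Hk in Hx. exact Hx. }
  rewrite length_map in Hcount.
  replace (INR (length l) * (A * Rmin (diam Sig) (bpow k) * W))
    with (INR (length l) * Rmin (diam Sig) (bpow k) * (A * W)) by ring.
  replace (6 * h * A * W) with (6 * h * (A * W)) by ring.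
  apply Rmult_le_compat_r; [nra|exact Hcount].
Qed.

Lemma lsum_beta_weight_le l :
  NoDup l -> (forall e, In e l -> Xk (fst e) (snd e) /\ forall y, Sig y -> mball (12 * A) e y) ->
  lsum (beta_weight Sig A s) l
    <= 6 * Rpower 24 (s - 1) / (1 - Rpower (/2) (s - 1)) * A * h.
Proof.
  intros Hnd Hl.
  set (q := Rpower (/2) (s - 1)). set (P := Rpower 24 (s - 1)).
  assert (Hq : 0 < q < 1) by (split; [apply exp_pos|apply Rpower_half_lt1; lra]).
  assert (HP : 0 < P) by apply exp_pos.
  pose proof (H1_le_ge0 X Sig h Sig_H1) as Hh.
  destruct (classic (l = nil)) as [->|Hne].
  { simpl. assert (0 < / (1 - q)) by (apply Rinv_0_lt_compat; lra).
    unfold Rdiv. repeat apply Rmult_le_pos; lra. }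
  destruct (list_level_range l Hne) as [K [m [[e0 [He0 HK0]] Hrange]]].
  assert (HK : diam Sig <= 24 * A * bpow K).
  { rewrite <- HK0. pose proof (bpow_gt0 (fst e0)).
    apply Rle_trans with (2 * (12 * A * bpow (fst e0))); [|lra].
    apply diam_le_ball with (snd e0); [nra|apply (Hl e0 He0)]. }
  apply Rle_trans with (sum_f_R0 (fun j => 6 * h * A * (P * q ^ j)) (Z.to_nat (K - m))).
  - apply (lsum_by_levels _ _ K); auto.
    + intros e He. specialize (Hrange e He). lia.
    + intros j l' _ Hnd' Hincl Hlev. apply level_sum_le with (K := K); auto.
      intros e He. split; [auto|]. apply (Hl e (Hincl e He)).
  - rewrite (sum_eq _ (fun j => q ^ j * (6 * h * A * P))) by (intros; ring).
    rewrite <- scal_sum.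
    replace (6 * P / (1 - q) * A * h) with (6 * h * A * P * / (1 - q)) by (field; lra).
    apply Rmult_le_compat_l; [repeat apply Rmult_le_pos; lra|]. apply sum_geometric_le, Hq.
Qed.

End MultiresolutionSum.

Theorem mainTheorem19 :
  forall s : R, 1 < s ->
  exists C : R, 0 < C /\
  forall (X : Banach) (Sig : X -> Prop) (Xk : Z -> X -> Prop) (A : R),
    connected Sig ->
    1 < A ->
    multiresolution_nets Sig Xk ->
    forall h : R, H1_le Sig h ->
    forall l : list (Z * X), NoDup l ->
      (forall kx, In kx l ->
         Xk (fst kx) (snd kx) /\
         (beta Sig (mball A kx) = 0 \/
          (forall y, Sig y -> mball (12 * A) kx y))) ->
      lsum (fun kx => rpow (beta Sig (mball A kx)) s * diam (mball A kx)) l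
        <= C * A * h.
Proof.
  intros s Hs.
  exists (6 * Rpower 24 (s - 1) / (1 - Rpower (/2) (s - 1))). split.
  { apply Rdiv_lt_0_compat; [pose proof (exp_pos ((s - 1) * ln 24)); unfold Rpower; lra|].
    pose proof (Rpower_half_lt1 (s - 1)). lra. }
  intros X Sig Xk A Hconn HA Hnets h HH l Hnd Hl.
  change (lsum (beta_weight Sig A s) l
            <= 6 * Rpower 24 (s - 1) / (1 - Rpower (/2) (s - 1)) * A * h).
  set (active := fun e => if Rlt_dec 0 (beta Sig (mball A e)) then true else false).
  rewrite (lsum_filter _ active l).
  2:{ intros e _ He. unfold active in He. destruct Rlt_dec; [discriminate|].
      unfold beta_weight, rpow. destruct Rlt_dec; [contradiction|ring]. }
  apply (lsum_beta_weight_le X Sig Xk); auto using NoDup_filter.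
  intros e He. apply filter_In in He. destruct He as [He Ha]. unfold active in Ha.
  destruct Rlt_dec as [Hb|]; [|discriminate].
  destruct (Hl e He) as [Hx [E|Hin]]; [rewrite E in Hb; lra|auto].
Qed.
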